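(* Let $M$ be a tabular MDP with finite $\mathcal S,\mathcal A$, discount $\gamma\in(0,1)$, and reward $r(\cdot;\theta^* )$ with $|r(s,a;\theta^* )|\le R_{\max}$. Let $P^*$ and $\tilde P$ be two transition models, and let $Q^*,\tilde Q$ be the fixed points of the soft Bellman update using $P^*$ and $\tilde P$ respectively, with policies $\pi^*(a\mid s;\theta^* )\propto\exp(Q^*(s,a;\theta^* ))$ and $\tilde\pi(a\mid s;\theta^* )\propto\exp(\tilde Q(s,a;\theta^* ))$. Let $\Delta_P=\sup_{s,a}\|P^*(\cdot\mid s,a)-\tilde P(\cdot\mid s,a)\|_1$. Then $$\mathbb E_{s\sim w^*}\big[D_{\mathrm{KL}}(\pi^*(\cdot\mid s;\theta^* )\,\|\,\tilde\pi(\cdot\mid s;\theta^* ))\big]\le\frac{2|\mathcal A|R_{\max}}{(1-\gamma)^2}\,\Delta_P .$$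
   Context: The soft Bellman update with transition model $P$ and discount $\gamma$ is $Q(s,a;\theta)=r(s,a;\theta)+\gamma\sum_{s'}P(s'\mid s,a)V(s';\theta)$, $V(s;\theta)=\log\sum_{a\in\mathcal A}\exp(Q(s,a;\theta))$. $w^*$ is the discounted stationary state distribution of $\pi^*$ (under the true MDP). *)

From HB Require Import structures.
From mathcomp Require Import all_boot all_order all_algebra.
From mathcomp Require Import all_classical all_reals all_analysis.
Set Implicit Arguments. Unset Strict Implicit. Unset Printing Implicit Defensive.
Import Order.TTheory GRing.Theory Num.Theory.
Local Open Scope ring_scope.

Section MDP.
Variables (R : realType) (S A : finType).

(* a transition model: P s a s' = P(s' | s, a) *)
Definition is_transition (P : S -> A -> S -> R) : Prop :=
  forall s a, (forall s', 0 <= P s a s') /\ \sum_(s' : S) P s a s' = 1.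

Definition is_distribution (mu : S -> R) : Prop :=
  (forall s, 0 <= mu s) /\ \sum_(s : S) mu s = 1.

Definition softV (Q : S -> A -> R) (s : S) : R :=
  ln (\sum_(a : A) expR (Q s a)).

Definition soft_bellman_fixpoint (r : S -> A -> R) (g : R)
    (P : S -> A -> S -> R) (Q : S -> A -> R) : Prop :=
  forall s a, Q s a = r s a + g * \sum_(s' : S) P s a s' * softV Q s'.

Definition softmax_policy (Q : S -> A -> R) (s : S) (a : A) : R :=
  expR (Q s a) / \sum_(b : A) expR (Q s b).

Definition KL (p q : A -> R) : R :=
  \sum_(a : A) p a * ln (p a / q a).

Fixpoint state_dist (mu0 : S -> R) (pi : S -> A -> R)
    (P : S -> A -> S -> R) (t : nat) : S -> R :=
  match t with
  | 0%N => mu0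
  | t'.+1 => fun s' => \sum_(s : S) \sum_(a : A)
        state_dist mu0 pi P t' s * pi s a * P s a s'
  end.

Definition disc_state_dist (g : R) (mu0 : S -> R) (pi : S -> A -> R)
    (P : S -> A -> S -> R) (s : S) : R :=
  (1 - g) * limn (fun n => \sum_(0 <= t < n) g ^+ t * state_dist mu0 pi P t s).

Definition trans_dist (P P' : S -> A -> S -> R) : R :=
  \big[Num.max/0]_(sa : S * A) \sum_(s' : S) `|P sa.1 sa.2 s' - P' sa.1 sa.2 s'|.

End MDP.

(* Let [D] be the largest gap [|Q* s a - Q~ s a|]. Subtracting the two soft
   Bellman equations, [D] is at most [g] times an average of [|V* - V~| <= D]
   (log-sum-exp is 1-Lipschitz for the sup norm) plus [g] times
   [(P* - P~) V~], which is at most [Delta_P] times half the span of [V~]; that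
   span is at most [2 Rmax / (1 - g)]. Hence [D <= g Delta_P Rmax / (1 - g)^2].
   The log-ratio of two softmax policies is at most twice the sup distance of
   their logits, so each KL term is at most [2 D], and [w*] has total mass at
   most 1. The factor [|A| >= 1] is slack. *)

From HB Require Import structures.
From mathcomp Require Import all_boot all_order all_algebra.
From mathcomp Require Import all_classical all_reals all_analysis.
From mathcomp Require Import ring lra.
Import Order.TTheory GRing.Theory Num.Theory numFieldNormedType.Exports.
Local Open Scope ring_scope.

Section Expectations.
Variables (R : realFieldType) (I : finType).

Lemma expectation_le (p f : I -> R) (B : R) :
  (forall i, 0 <= p i) -> \sum_i p i = 1 -> (forall i, f i <= B) ->
  \sum_i p i * f i <= B.
Proof.
move=> p_ge0 p_sum1 f_le; apply: le_trans (_ : \sum_i p i * B <= _).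
  by apply: ler_sum => i _; rewrite ler_wpM2l.
by rewrite -mulr_suml p_sum1 mul1r.
Qed.

Lemma expectation_ge (p f : I -> R) (B : R) :
  (forall i, 0 <= p i) -> \sum_i p i = 1 -> (forall i, B <= f i) ->
  B <= \sum_i p i * f i.
Proof.
move=> p_ge0 p_sum1 f_ge; apply: le_trans (_ : \sum_i p i * B <= _).
  by rewrite -mulr_suml p_sum1 mul1r.
by apply: ler_sum => i _; rewrite ler_wpM2l.
Qed.

Lemma subprob_expectation_le (p f : I -> R) (B : R) :
  (forall i, 0 <= p i) -> \sum_i p i <= 1 -> 0 <= B -> (forall i, f i <= B) ->
  \sum_i p i * f i <= B.
Proof.
move=> p_ge0 p_sum_le1 B_ge0 f_le; apply: le_trans (_ : \sum_i p i * B <= _).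
  by apply: ler_sum => i _; rewrite ler_wpM2l.
by rewrite -mulr_suml ler_piMl.
Qed.

(* Centering [f] at the middle of its range costs nothing since [p - q] has total mass 0. *)
Lemma norm_expectation_diff_le (p q f : I -> R) (c : R) :
  \sum_i p i = 1 -> \sum_i q i = 1 -> (forall i j, f i - f j <= c) ->
  `|\sum_i (p i - q i) * f i| <= (\sum_i `|p i - q i|) * (c / 2).
Proof.
move=> p_sum1 q_sum1 f_osc.
case: (pickP (xpredT : pred I)) => [i0 _ | I0]; last first.
  by rewrite !big_pred0 ?normr0 ?mul0r.
have [j0 _ f_min] := @arg_minP _ R I i0 xpredT f isT.
set m := f j0 + c / 2.
have -> : \sum_i (p i - q i) * f i = \sum_i (p i - q i) * (f i - m).
  under [RHS]eq_bigr => i _ do rewrite mulrBr.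
  by rewrite sumrB -mulr_suml sumrB p_sum1 q_sum1 subrr mul0r subr0.
rewrite mulr_suml; apply: le_trans (ler_norm_sum _ _ _) _.
apply: ler_sum => i _; rewrite normrM ler_wpM2l // ler_norml /m.
have := f_min i isT; have := f_osc i j0; lra.
Qed.

End Expectations.

Arguments expectation_le {R I} [p f B].
Arguments expectation_ge {R I} [p f B].
Arguments subprob_expectation_le {R I} [p f B].
Arguments norm_expectation_diff_le {R I} [p q f c].

Section LogSumExp.
Variables (R : realType) (A : finType) (a0 : A).

Definition lse (f : A -> R) : R := ln (\sum_a expR (f a)).

Lemma sum_expR_gt0 (f : A -> R) : 0 < \sum_a expR (f a).
Proof.
rewrite (bigD1 a0) //= ltr_pwDl ?expR_gt0 //.
by apply: sumr_ge0 => a _; exact: expR_ge0.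
Qed.

Lemma lse_le_shift (f h : A -> R) (c : R) :
  (forall a, f a <= h a + c) -> lse f <= lse h + c.
Proof.
move=> f_le; rewrite /lse -[c in _ + c]expRK -lnM ?posrE ?expR_gt0 ?sum_expR_gt0 //.
rewrite ler_ln ?posrE ?mulr_gt0 ?expR_gt0 ?sum_expR_gt0 // mulr_suml.
by apply: ler_sum => a _; rewrite -expRD ler_expR.
Qed.

Lemma lse_dist_le (f h : A -> R) (D : R) :
  (forall a, `|f a - h a| <= D) -> `|lse f - lse h| <= D.
Proof.
move=> fh_le; rewrite ler_norml.
have f_le : lse f <= lse h + D.
  by apply: lse_le_shift => a; have := fh_le a; rewrite ler_norml; lra.
have h_le : lse h <= lse f + D.
  by apply: lse_le_shift => a; have := fh_le a; rewrite ler_norml; lra.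
lra.
Qed.

End LogSumExp.

Arguments lse {R A}.
Arguments sum_expR_gt0 {R A} a0 f.
Arguments lse_le_shift {R A} a0 [f h c].
Arguments lse_dist_le {R A} a0 [f h D].

Section Softmax.
Variables (R : realType) (S A : finType) (a0 : A).
Implicit Types (Q : S -> A -> R) (s : S) (a : A).

Lemma softmax_policy_gt0 Q s a : 0 < softmax_policy Q s a.
Proof. by rewrite /softmax_policy divr_gt0 ?expR_gt0 ?(sum_expR_gt0 a0). Qed.

Lemma sum_softmax_policy Q s : \sum_a softmax_policy Q s a = 1.
Proof. by rewrite /softmax_policy -mulr_suml divff // gt_eqF ?(sum_expR_gt0 a0). Qed.

Lemma ln_softmax_policy Q s a : ln (softmax_policy Q s a) = Q s a - lse (Q s).
Proof.
by rewrite /softmax_policy ln_div ?posrE ?expR_gt0 ?(sum_expR_gt0 a0) // expRK.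
Qed.

Lemma KL_softmax_policy_le Q Q' s (D : R) :
  (forall a, `|Q s a - Q' s a| <= D) ->
  KL (softmax_policy Q s) (softmax_policy Q' s) <= 2 * D.
Proof.
move=> QQ'_le; apply: expectation_le => [a | | a].
- exact/ltW/softmax_policy_gt0.
- exact: sum_softmax_policy.
rewrite ln_div ?posrE ?softmax_policy_gt0 // !ln_softmax_policy.
have := QQ'_le a; have := lse_dist_le a0 QQ'_le; rewrite !ler_norml; lra.
Qed.

End Softmax.

Arguments softmax_policy_gt0 {R S A} a0 Q s a.
Arguments sum_softmax_policy {R S A} a0 Q s.
Arguments KL_softmax_policy_le {R S A} a0 [Q Q' s D].

Section TransitionDistance.
Variables (R : realType) (S A : finType).

Lemma trans_dist_ge (P P' : S -> A -> S -> R) s a :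
  \sum_x `|P s a x - P' s a x| <= trans_dist P P'.
Proof. by rewrite /trans_dist (bigD1 (s, a)) //= le_max lexx. Qed.

Lemma trans_dist_ge0 (P P' : S -> A -> S -> R) : 0 <= trans_dist P P'.
Proof.
apply: (big_ind (fun x => 0 <= x)) => [//|x y x_ge0 _|sa _].
  by rewrite le_max x_ge0.
by apply: sumr_ge0 => x _; exact: normr_ge0.
Qed.

End TransitionDistance.

Section SoftBellman.
Variables (R : realType) (S A : finType) (a0 : A) (g : R) (r : S -> A -> R) (Rmax : R).
Hypotheses (g_ge0 : 0 <= g) (g_lt1 : g < 1) (r_le : forall s a, `|r s a| <= Rmax).

(* The soft Bellman operator is a [g]-contraction of the span up to [2 Rmax]. *)
Lemma softV_span_le P Q :
  is_transition P -> soft_bellman_fixpoint r g P Q ->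
  forall s s', softV Q s - softV Q s' <= 2 * Rmax / (1 - g).
Proof.
move=> P_tr Q_fix s s'.
have [sM _ V_le] := @arg_maxP _ R S s xpredT (softV Q) isT.
have [sm _ V_ge] := @arg_minP _ R S s xpredT (softV Q) isT.
have {}V_le x : softV Q x <= softV Q sM := V_le x isT.
have {}V_ge x : softV Q sm <= softV Q x := V_ge x isT.
suff span_le : softV Q sM - softV Q sm <= 2 * Rmax / (1 - g).
  by have := V_le s; have := V_ge s'; lra.
have VM_le : softV Q sM <= softV Q sm + (2 * Rmax + g * (softV Q sM - softV Q sm)).
  apply: (lse_le_shift a0) => a; rewrite (Q_fix sM a) (Q_fix sm a).
  have avgM := expectation_le (P_tr sM a).1 (P_tr sM a).2 V_le.
  have avgm := expectation_ge (P_tr sm a).1 (P_tr sm a).2 V_ge.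
  have := ler_wpM2l g_ge0 avgM; have := ler_wpM2l g_ge0 avgm.
  have := r_le sM a; have := r_le sm a; rewrite !ler_norml; lra.
by rewrite ler_pdivlMr ?subr_gt0 //; nra.
Qed.

Lemma soft_bellman_diff_le P P' Q Q' (D : R) :
  is_transition P -> is_transition P' ->
  soft_bellman_fixpoint r g P Q -> soft_bellman_fixpoint r g P' Q' ->
  (forall s a, `|Q s a - Q' s a| <= D) ->
  forall s a, `|Q s a - Q' s a| <= g * (D + trans_dist P P' * (Rmax / (1 - g))).
Proof.
move=> P_tr P'_tr Q_fix Q'_fix QQ'_le s a.
have -> : Q s a - Q' s a = g * (\sum_x P s a x * (softV Q x - softV Q' x)
                               + \sum_x (P s a x - P' s a x) * softV Q' x).
  rewrite (Q_fix s a) (Q'_fix s a) -big_split /=.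
  rewrite [in RHS](eq_bigr (fun x => P s a x * softV Q x - P' s a x * softV Q' x)).
    by rewrite sumrB; ring.
  by move=> x _; ring.
rewrite normrM ger0_norm // ler_wpM2l //; apply: le_trans (ler_normD _ _) _.
apply: lerD.
  apply: le_trans (ler_norm_sum _ _ _) _.
  under eq_bigr => x _ do rewrite normrM (ger0_norm ((P_tr s a).1 x)).
  apply: expectation_le (P_tr s a).1 (P_tr s a).2 _ => x.
  exact (lse_dist_le a0 (QQ'_le x)).
have Rmax_ge0 : 0 <= Rmax := le_trans (normr_ge0 _) (r_le s a).
have V'_span := softV_span_le _ _ P'_tr Q'_fix.
apply: le_trans (norm_expectation_diff_le (P_tr s a).2 (P'_tr s a).2 V'_span) _.
have -> : 2 * Rmax / (1 - g) / 2 = Rmax / (1 - g).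
  by field; rewrite subr_eq0 eq_sym lt_eqF.
by apply: ler_wpM2r; [rewrite divr_ge0 // subr_ge0 ltW | exact: trans_dist_ge].
Qed.

(* A perturbation [D] of the fixed point feeds back with weight [g], so
   [D <= g * (D + trans_dist P P' * Rmax / (1 - g))] at the worst pair [(s, a)]. *)
Lemma soft_bellman_fixpoint_dist_le P P' Q Q' :
  is_transition P -> is_transition P' ->
  soft_bellman_fixpoint r g P Q -> soft_bellman_fixpoint r g P' Q' ->
  forall s a, `|Q s a - Q' s a| <= g * trans_dist P P' * Rmax / (1 - g) ^+ 2.
Proof.
move=> P_tr P'_tr Q_fix Q'_fix s a.
pose F (sa : S * A) := `|Q sa.1 sa.2 - Q' sa.1 sa.2|.
have [p _ F_le] := @arg_maxP _ R _ (s, a) xpredT F isT.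
have QQ'_le s' a' : `|Q s' a' - Q' s' a'| <= F p := F_le (s', a') isT.
have := soft_bellman_diff_le _ _ _ _ _ P_tr P'_tr Q_fix Q'_fix QQ'_le p.1 p.2.
rewrite -/(F p); set E := Rmax / (1 - g) => Fp_le.
apply: le_trans (QQ'_le s a) _.
have -> : g * trans_dist P P' * Rmax / (1 - g) ^+ 2 = g * trans_dist P P' * E / (1 - g).
  by rewrite /E; field; rewrite subr_eq0 eq_sym lt_eqF.
by rewrite ler_pdivlMr ?subr_gt0 //; nra.
Qed.

End SoftBellman.

Arguments soft_bellman_fixpoint_dist_le {R S A} a0 {g r Rmax}
  g_ge0 g_lt1 r_le [P P' Q Q'].

Lemma sum_geometric_le (R : realFieldType) (g : R) n :
  0 <= g -> g < 1 -> \sum_(0 <= t < n) g ^+ t <= (1 - g)^-1.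
Proof.
move=> g_ge0 g_lt1; rewrite big_mkord -div1r ler_pdivlMr ?subr_gt0 //.
have := subrX1 g n; have := exprn_ge0 n g_ge0; lra.
Qed.

Arguments sum_geometric_le {R g} n.

Lemma is_cvgn_sum (R : realType) (I : Type) (s : seq I) (u : I -> nat -> R) :
  (forall i, cvgn (u i)) -> cvgn (fun n => \sum_(i <- s) u i n).
Proof.
move=> u_cvg; elim: s => [|i s IH].
  by under eq_fun do rewrite big_nil; exact: is_cvg_cst.
have -> : (fun n => \sum_(j <- i :: s) u j n) = u i + (fun n => \sum_(j <- s) u j n).
  by apply/funext => n; rewrite big_cons.
exact: is_cvgD.
Qed.

Lemma limn_sum (R : realType) (I : Type) (s : seq I) (u : I -> nat -> R) :
  (forall i, cvgn (u i)) ->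
  limn (fun n => \sum_(i <- s) u i n) = \sum_(i <- s) limn (u i).
Proof.
move=> u_cvg; elim: s => [|i s IH].
  by under eq_fun do rewrite big_nil; rewrite big_nil lim_cst.
have -> : (fun n => \sum_(j <- i :: s) u j n) = u i + (fun n => \sum_(j <- s) u j n).
  by apply/funext => n; rewrite big_cons.
rewrite big_cons limD //; [by rewrite IH | exact: is_cvgn_sum].
Qed.

Arguments is_cvgn_sum {R I} s [u].
Arguments limn_sum {R I} s [u].

Section DiscountedStateDistribution.
Variables (R : realType) (S A : finType) (g : R) (mu0 : S -> R)
  (pi : S -> A -> R) (P : S -> A -> S -> R).
Hypotheses (g_ge0 : 0 <= g) (g_lt1 : g < 1) (mu0_distr : is_distribution mu0)
  (pi_ge0 : forall s a, 0 <= pi s a) (pi_sum1 : forall s, \sum_a pi s a = 1)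
  (P_tr : is_transition P).

Lemma state_dist_distribution t : is_distribution (state_dist mu0 pi P t).
Proof.
elim: t => [|t [dist_ge0 dist_sum1]] //=; split.
  move=> s'; apply: sumr_ge0 => s _; apply: sumr_ge0 => a _.
  by rewrite !mulr_ge0 ?(P_tr s a).1.
rewrite exchange_big /= -[RHS]dist_sum1; apply: eq_bigr => s _.
rewrite exchange_big /= -[RHS]mulr1 -(pi_sum1 s) mulr_sumr; apply: eq_bigr => a _.
by rewrite -mulr_sumr (P_tr s a).2 mulr1.
Qed.

Let partial_disc s n := \sum_(0 <= t < n) g ^+ t * state_dist mu0 pi P t s.

Let partial_disc_term_ge0 s t : 0 <= g ^+ t * state_dist mu0 pi P t s.
Proof. by rewrite mulr_ge0 ?exprn_ge0 ?(state_dist_distribution t).1. Qed.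

Let sum_partial_disc n : \sum_s partial_disc s n = \sum_(0 <= t < n) g ^+ t.
Proof.
rewrite exchange_big /=; apply: eq_bigr => t _.
by rewrite -mulr_sumr (state_dist_distribution t).2 mulr1.
Qed.

Let partial_disc_le s n : partial_disc s n <= (1 - g)^-1.
Proof.
apply: le_trans (sum_geometric_le n g_ge0 g_lt1); rewrite -sum_partial_disc.
rewrite (bigD1 s) //= lerDl.
by apply: sumr_ge0 => s' _; apply: sumr_ge0 => t _; exact: partial_disc_term_ge0.
Qed.

Let partial_disc_cvg s : cvgn (partial_disc s).
Proof.
apply: nondecreasing_is_cvgn; last by exists (1 - g)^-1 => _ [n _ <-]; exact: partial_disc_le.
move=> n m le_nm; rewrite /partial_disc (big_cat_nat _ le_nm) //= lerDl.
by apply: sumr_ge0 => t _; exact: partial_disc_term_ge0.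
Qed.

Lemma disc_state_dist_ge0 s : 0 <= disc_state_dist g mu0 pi P s.
Proof.
apply: mulr_ge0; first by rewrite subr_ge0 ltW.
apply: limr_ge; first exact: partial_disc_cvg.
by apply: nearW => n; apply: sumr_ge0 => t _; exact: partial_disc_term_ge0.
Qed.

Lemma sum_disc_state_dist_le1 : \sum_s disc_state_dist g mu0 pi P s <= 1.
Proof.
have g'_gt0 : 0 < 1 - g by rewrite subr_gt0.
rewrite -mulr_sumr -(limn_sum _ partial_disc_cvg) -[leRHS](mulfV (lt0r_neq0 g'_gt0)).
apply: ler_wpM2l; first exact: ltW.
apply: limr_le; first exact: is_cvgn_sum.
by apply: nearW => n; rewrite sum_partial_disc sum_geometric_le.
Qed.

End DiscountedStateDistribution.

Arguments disc_state_dist_ge0 {R S A g mu0 pi P}.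
Arguments sum_disc_state_dist_le1 {R S A g mu0 pi P}.

Theorem corollary1 (R : realType) (S A : finType) (a0 : A)
    (g : R) (hg0 : 0 < g) (hg1 : g < 1)
    (r : S -> A -> R) (Rmax : R) (hr : forall s a, `|r s a| <= Rmax)
    (Pstar Ptil : S -> A -> S -> R)
    (hPstar : is_transition Pstar) (hPtil : is_transition Ptil)
    (Qstar Qtil : S -> A -> R)
    (hQstar : soft_bellman_fixpoint r g Pstar Qstar)
    (hQtil : soft_bellman_fixpoint r g Ptil Qtil)
    (mu0 : S -> R) (hmu0 : is_distribution mu0) :
  let pistar := softmax_policy Qstar in
  let pitil := softmax_policy Qtil in
  let wstar := disc_state_dist g mu0 pistar Pstar in
  \sum_(s : S) wstar s * KL (pistar s) (pitil s)
    <= (2 * #|{: A}|%:R * Rmax) / (1 - g) ^+ 2 * trans_dist Pstar Ptil.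
Proof.
rewrite [X in is_true X]/=.
set pistar := softmax_policy Qstar; set pitil := softmax_policy Qtil.
case: (pickP (xpredT : pred S)) => [s0 _ | S0]; last first.
  by rewrite big_pred0 // /trans_dist big_pred0 ?mulr0 // => -[s a]; exact: S0.
have g_ge0 := ltW hg0.
have Rmax_ge0 : 0 <= Rmax := le_trans (normr_ge0 _) (hr s0 a0).
set B := g * trans_dist Pstar Ptil * Rmax / (1 - g) ^+ 2.
have B_ge0 : 0 <= B.
  by rewrite /B divr_ge0 ?mulr_ge0 ?exprn_ge0 ?trans_dist_ge0 // subr_ge0 ltW.
have QQ_le := soft_bellman_fixpoint_dist_le a0 g_ge0 hg1 hr hPstar hPtil hQstar hQtil.
have KL_le s : KL (pistar s) (pitil s) <= 2 * B.
  exact (KL_softmax_policy_le a0 (QQ_le s)).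
have pistar_ge0 s a : 0 <= pistar s a by exact/ltW/softmax_policy_gt0.
have pistar_sum1 := sum_softmax_policy a0 Qstar.
have w_ge0 := disc_state_dist_ge0 g_ge0 hg1 hmu0 pistar_ge0 pistar_sum1 hPstar.
have w_le1 := sum_disc_state_dist_le1 g_ge0 hg1 hmu0 pistar_ge0 pistar_sum1 hPstar.
apply: le_trans (subprob_expectation_le w_ge0 w_le1 _ KL_le) _; first by rewrite mulr_ge0.
have card_ge1 : 1 <= #|{: A}|%:R :> R by rewrite ler1n; apply/card_gt0P; exists a0.
rewrite /B -!mulrA ler_wpM2l // !mulrA.
have -> : #|{: A}|%:R * Rmax / (1 - g) ^+ 2 * trans_dist Pstar Ptil
          = #|{: A}|%:R * trans_dist Pstar Ptil * Rmax / (1 - g) ^+ 2 by ring.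
apply: ler_wpM2r; first by rewrite invr_ge0 exprn_ge0 // subr_ge0 ltW.
apply: ler_wpM2r => //; apply: ler_wpM2r; first exact: trans_dist_ge0.
exact: le_trans (ltW hg1) card_ge1.
Qed.
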